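(* Let $\mathcal{A}$ be a unital algebra over a field $F$ with $\operatorname{char}(F)\neq2$, having an idempotent $e\neq0,1$, and write $e^{\perp}=1-e$. Assume that for every $x\in\mathcal{A}$: if $exe\cdot e\mathcal{A}e^{\perp}=\{0\}=e^{\perp}\mathcal{A}e\cdot exe$ then $exe=0$, and if $e\mathcal{A}e^{\perp}\cdot e^{\perp}xe^{\perp}=\{0\}=e^{\perp}xe^{\perp}\cdot e^{\perp}\mathcal{A}e$ then $e^{\perp}xe^{\perp}=0$. Then $\operatorname{QJDer}(\mathcal{A})=\operatorname{Cent}(\mathcal{A})+\operatorname{JDer}(\mathcal{A})$.
   Context: $x\circ y=xy+yx$. $\operatorname{QJDer}(\mathcal{A})$: linear $f:\mathcal{A}\to\mathcal{A}$ for which there is a linear $h$ with $f(x)\circ y+x\circ f(y)=h(x\circ y)$ for all $x,y$. $\operatorname{Cent}(\mathcal{A})$: linear $f$ with $f(xy)=f(x)y=xf(y)$. $\operatorname{JDer}(\mathcal{A})$: linear $d$ with $d(x\circ y)=d(x)\circ y+x\circ d(y)$. Sums of sets of maps are sets of pointwise sums. *)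

From HB Require Import structures.
From mathcomp Require Import all_boot all_order all_algebra.
Set Implicit Arguments. Unset Strict Implicit. Unset Printing Implicit Defensive.
Import GRing.Theory.
Local Open Scope ring_scope.

Section Defs.
Variables (F : fieldType) (A : algType F).

Definition is_linear (f : A -> A) : Prop :=
  forall (a : F) (x y : A), f (a *: x + y) = a *: f x + f y.

Definition jprod (x y : A) : A := x * y + y * x.

Definition QJDer (f : A -> A) : Prop :=
  is_linear f /\
  exists h : A -> A, is_linear h /\
    forall x y, jprod (f x) y + jprod x (f y) = h (jprod x y).

Definition Cent (f : A -> A) : Prop :=
  is_linear f /\ forall x y, f (x * y) = f x * y /\ f (x * y) = x * f y.

Definition JDer (d : A -> A) : Prop :=
  is_linear d /\ forall x y, d (jprod x y) = jprod (d x) y + jprod x (d y).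
End Defs.

(* Write z = f 1 and q = 1 - e.  Putting x = 1 in the quasi-Jordan identity
   f x o y + x o f y = h (x o y) identifies h, leaving
     2 (f x o y + x o f y) = z o (x o y) + 2 f (x o y).
   Cutting this identity at (e, e) and (q, q) with the Peirce projections shows
   e z q = 0 = q z e, so z commutes with e; cutting it at (e, e a q) and
   (q, q a e) shows that z commutes with the off-diagonal spaces e A q, q A e.
   For t in e A e the commutator [z, t] stays in e A e and annihilates both
   off-diagonal spaces, so it vanishes by the hypothesis on e, and likewise on
   q A q.  Hence z is central: x |-> z x lies in the centroid and
   x |-> f x - z x is a Jordan derivation.  The converse is a direct
   computation with h = 2 c + d. *)

From HB Require Import structures.
From mathcomp Require Import all_boot all_order all_algebra.
Set Implicit Arguments.
Unset Strict Implicit.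
Unset Printing Implicit Defensive.
Import GRing.Theory.
Local Open Scope ring_scope.

Lemma mulr2nI (F : fieldType) (V : lmodType F) :
  (2%:R : F) != 0 -> injective (fun v : V => v *+ 2).
Proof. by move=> two_neq0 u v; rewrite /= -!scaler_nat => /scalerI->. Qed.

Section JordanProduct.
Variables (F : fieldType) (A : algType F).

Lemma is_linearD (f : A -> A) : is_linear f -> {morph f : x y / x + y}.
Proof. by move=> f_lin x y; rewrite -{1}(scale1r x) f_lin scale1r. Qed.

Lemma jprodDl (u v y : A) : jprod (u + v) y = jprod u y + jprod v y.
Proof. by rewrite /jprod mulrDl mulrDr addrACA. Qed.

Lemma jprodDr (u v y : A) : jprod y (u + v) = jprod y u + jprod y v.
Proof. by rewrite /jprod mulrDl mulrDr addrACA. Qed.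

Lemma jprodBl (u v y : A) : jprod (u - v) y = jprod u y - jprod v y.
Proof. by rewrite /jprod mulrBl mulrBr opprD addrACA. Qed.

Lemma jprodBr (u v y : A) : jprod y (u - v) = jprod y u - jprod y v.
Proof. by rewrite /jprod mulrBl mulrBr opprD addrACA. Qed.

Lemma Cent_jprod (c : A -> A) : Cent c ->
  forall x y, jprod (c x) y + jprod x (c y) = c (jprod x y) *+ 2.
Proof.
case=> c_lin c_mul x y.
have cl u v : c u * v = c (u * v) by case: (c_mul u v).
have cr u v : u * c v = c (u * v) by case: (c_mul u v).
by rewrite /jprod !cl !cr -(is_linearD c_lin) mulr2n.
Qed.

Lemma Cent_mull (z : A) : (forall x, GRing.comm z x) -> Cent (fun x => z * x).
Proof.
move=> z_central; split=> [a x y | x y]; first by rewrite mulrDr scalerAr.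
by rewrite mulrA; split=> //; rewrite z_central -mulrA z_central.
Qed.

Lemma QJDer_Cent_JDer (f c d : A -> A) :
  Cent c -> JDer d -> (forall x, f x = c x + d x) -> QJDer f.
Proof.
move=> c_cent [d_lin d_jder] fE; have c_lin := c_cent.1.
split=> [a x y | ]; first by rewrite !fE c_lin d_lin scalerDr addrACA.
exists (fun x => c x *+ 2 + d x); split=> [a x y | x y].
  by rewrite c_lin d_lin mulrnDl scalerDr -scalerMnr addrACA.
by rewrite !fE jprodDl jprodDr addrACA Cent_jprod // d_jder.
Qed.

Lemma QJDer_identity (f : A -> A) : QJDer f -> forall x y,
  (jprod (f x) y + jprod x (f y)) *+ 2 = jprod (f 1) (jprod x y) + f (jprod x y) *+ 2.
Proof.
case=> _ [h [h_lin h_jder]] x y.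
have h2 w : h w *+ 2 = jprod (f 1) w + f w *+ 2.
  by have := h_jder 1 w; rewrite /jprod !mul1r !mulr1 (is_linearD h_lin) -!mulr2n => <-.
by rewrite h_jder h2.
Qed.

End JordanProduct.

Definition corner_faithful {R : pzRingType} (p q : R) : Prop :=
  forall x, (forall a, (p * x * p) * (p * a * q) = 0) ->
            (forall a, (q * a * p) * (p * x * p) = 0) -> p * x * p = 0.

Section PeirceDecomposition.
Variables (R : pzRingType) (p q : R).
Hypotheses (pp : p * p = p) (pDq : p + q = 1).

Lemma compl_idemE : q = 1 - p.
Proof. by rewrite -pDq addrAC subrr add0r. Qed.

Lemma mul_idem_compl : p * q = 0.
Proof. by rewrite compl_idemE mulrBr mulr1 pp subrr. Qed.

Lemma mul_compl_idem : q * p = 0.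
Proof. by rewrite compl_idemE mulrBl mul1r pp subrr. Qed.

Lemma compl_idem : q * q = q.
Proof. by rewrite {2}compl_idemE mulrBr mulr1 mul_compl_idem subr0. Qed.

Lemma comm_compl z : GRing.comm z p -> GRing.comm z q.
Proof. by rewrite compl_idemE; exact: commrB (commr1 z). Qed.

Lemma peirce_decomposition x : x = p * x * p + p * x * q + (q * x * p + q * x * q).
Proof. by rewrite -!mulrDr -!mulrA -!mulrDl pDq mul1r mulr1. Qed.

Lemma comm_idem_offdiag0 z : p * z * q = 0 -> q * z * p = 0 -> GRing.comm z p.
Proof.
move=> pzq qzp; rewrite /GRing.comm.
have -> : z * p = p * z * p by rewrite -[LHS]mul1r -pDq mulrDl !mulrA qzp addr0.
by rewrite -[p * z in RHS]mulr1 -pDq mulrDr pzq addr0.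
Qed.

Lemma comm_corner z : GRing.comm z p ->
    (forall u, GRing.comm z (p * u * q)) -> (forall u, GRing.comm z (q * u * p)) ->
  corner_faithful p q -> forall x, GRing.comm z (p * x * p).
Proof.
move=> zp z_pq z_qp faithful x; set t := p * x * p.
have pt : p * t = t by rewrite /t !mulrA pp.
have tp : t * p = t by rewrite /t -!mulrA pp.
have t_pq a : t * (p * a * q) = p * (x * p * p * a) * q by rewrite /t !mulrA.
have qp_t a : (q * a * p) * t = q * (a * p * p * x) * p by rewrite /t !mulrA.
clearbody t.
have pcp : p * (z * t - t * z) * p = z * t - t * z.
  have zt : p * (z * t) * p = z * t by rewrite !mulrA -zp -!mulrA tp pt.
  have tz : p * (t * z) * p = t * z by rewrite !mulrA pt -mulrA zp mulrA tp.
  by rewrite mulrBr mulrBl zt tz.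
apply/eqP; rewrite -subr_eq0 -pcp; apply/eqP/faithful => a; rewrite pcp.
- by rewrite mulrBl -mulrA t_pq z_pq -t_pq -[t * z * _]mulrA z_pq !mulrA subrr.
- by rewrite mulrBr mulrA -z_qp -mulrA qp_t z_qp -qp_t !mulrA subrr.
Qed.
End PeirceDecomposition.

Lemma comm_peirce (R : pzRingType) (p q z : R) :
  p * p = p -> p + q = 1 -> GRing.comm z p ->
  (forall u, GRing.comm z (p * u * q)) -> (forall u, GRing.comm z (q * u * p)) ->
  corner_faithful p q -> corner_faithful q p -> forall x, GRing.comm z x.
Proof.
move=> pp pDq zp z_pq z_qp faithful_p faithful_q x.
have qq := compl_idem pp pDq.
have zq := comm_compl pDq zp.
rewrite (peirce_decomposition pDq x); apply: commrD; apply: commrD.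
- exact: comm_corner.
- exact: z_pq.
- exact: z_qp.
- exact: comm_corner.
Qed.

Section QuasiJordanIdentity.
Variables (F : fieldType) (A : algType F) (f : A -> A) (z : A).
Hypothesis two_reg : injective (fun u : A => u *+ 2).
Hypothesis f_add : {morph f : x y / x + y}.
Hypothesis f_qj : forall x y,
  (jprod (f x) y + jprod x (f y)) *+ 2 = jprod z (jprod x y) + f (jprod x y) *+ 2.

Section Corners.
Variables (p q : A).
Hypotheses (pp : p * p = p) (pDq : p + q = 1).

Let qq := compl_idem pp pDq.
Let pq := mul_idem_compl pp pDq.
Let qp := mul_compl_idem pp pDq.
Let mulr_pp x : x * p * p = x * p. Proof. by rewrite -mulrA pp. Qed.
Let mulr_pq x : x * p * q = 0. Proof. by rewrite -mulrA pq mulr0. Qed.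
Let mulr_qp x : x * q * p = 0. Proof. by rewrite -mulrA qp mulr0. Qed.

Lemma qj_idem : (f p * p + p * f p) *+ 2 = z * p + p * z + f p *+ 2.
Proof.
apply: two_reg => /=; have := f_qj p p.
rewrite /jprod pp [p * f p + _]addrC -mulr2n => ->.
by rewrite f_add -!mulr2n mulrnAr mulrnAl !mulrnDl.
Qed.

Lemma qj_offdiag : p * z * q = 0.
Proof.
have := congr1 (fun w => p * w * q) qj_idem => /=.
rewrite !(mulrnAr, mulrnAl, mulrDr, mulrDl, mulrA, pp, mulr_pp, mulr_pq, mul0rn, add0r).
by rewrite -[LHS]add0r => /addIr ->.
Qed.

Lemma qj_corner : p * f p * p = p * z * p.
Proof.
have := congr1 (fun w => p * w * p) qj_idem => /=.
rewrite !(mulrnAr, mulrnAl, mulrDr, mulrDl, mulrA, pp, mulr_pp).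
by rewrite mulrnDl => /addIr; rewrite -!mulr2n => /two_reg.
Qed.

Lemma qj_compl_corner : q * f p * q = 0.
Proof.
have := congr1 (fun w => q * w * q) qj_idem => /=.
rewrite !(mulrnAr, mulrnAl, mulrDr, mulrDl, mulrA, qp, mulr_qp, mulr_pq, mul0r).
rewrite !(mul0rn, add0r) => E.
by apply: two_reg; rewrite /= -E mul0rn.
Qed.

Lemma qj_comm_offdiag : GRing.comm z p -> forall u, GRing.comm z (p * u * q).
Proof.
move=> zp u; set m := p * u * q.
have pm : p * m = m by rewrite /m !mulrA pp.
have mq : m * q = m by rewrite /m -!mulrA qq.
have mp : m * p = 0 by rewrite /m -!mulrA qp !mulr0.
clearbody m.
have jpm : jprod p m = m by rewrite /jprod pm mp addr0.
have pfm : p * f p * m = z * m by rewrite -pm !mulrA qj_corner -zp mulr_pp.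
have mfq : m * f p * q = 0 by rewrite -mq -!mulrA [q * _]mulrA qj_compl_corner !mulr0.
have pzm : p * z * m = z * m by rewrite -zp -mulrA pm.
have mzq : m * z * q = m * z by rewrite -mulrA (comm_compl pDq zp) mulrA mq.
have xmq x : x * m * q = x * m by rewrite -mulrA mq.
(* Since p o m = m, cutting the identity at (p, m) leaves 2 z m = z m + m z. *)
have := congr1 (fun w => p * w * q) (f_qj p m) => /=.
rewrite jpm /jprod.
rewrite !(mulrnAr, mulrnAl, mulrDr, mulrDl, mulrA, pp, pm, xmq, mulr_pq, pfm, mfq, pzm, mzq).
by rewrite !addr0 mulrnDl => /addIr; rewrite mulr2n => /addrI.
Qed.
End Corners.

Lemma qj_central (p q : A) : p * p = p -> p + q = 1 ->
  corner_faithful p q -> corner_faithful q p -> forall x, GRing.comm z x.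
Proof.
move=> pp pDq faithful_p faithful_q.
have qq := compl_idem pp pDq; have qDp : q + p = 1 by rewrite addrC.
have zp := comm_idem_offdiag0 pDq (qj_offdiag pp pDq) (qj_offdiag qq qDp).
apply: (comm_peirce pp pDq zp _ _ faithful_p faithful_q).
- exact: qj_comm_offdiag pp pDq zp.
- exact: qj_comm_offdiag qq qDp (comm_compl pDq zp).
Qed.

Lemma JDer_subr_mull : (forall x, GRing.comm z x) -> is_linear f ->
  JDer (fun x => f x - z * x).
Proof.
move=> z_central f_lin; split=> [a x y | x y].
  by rewrite f_lin mulrDr -scalerAr scalerBr opprD addrACA.
apply: two_reg => /=.
rewrite jprodBl jprodBr addrACA -opprD (Cent_jprod (Cent_mull z_central)) !mulrnBl f_qj.
rewrite [jprod z _]/jprod -z_central -mulr2n.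
move: (z * jprod x y *+ 2) (f (jprod x y) *+ 2) => a b.
by rewrite mulr2n opprD addrA [a + b]addrC addrK.
Qed.

End QuasiJordanIdentity.

Theorem proposition4p4 (F : fieldType) (A : algType F) (e : A) :
  ~~ (2 \in [pchar F]) ->
  e * e = e -> e != 0 -> e != 1 ->
  (forall x : A,
     (forall a : A, (e * x * e) * (e * a * (1 - e)) = 0) ->
     (forall a : A, ((1 - e) * a * e) * (e * x * e) = 0) ->
     e * x * e = 0) ->
  (forall x : A,
     (forall a : A, (e * a * (1 - e)) * ((1 - e) * x * (1 - e)) = 0) ->
     (forall a : A, ((1 - e) * x * (1 - e)) * ((1 - e) * a * e) = 0) ->
     (1 - e) * x * (1 - e) = 0) ->
  forall f : A -> A,
    QJDer f <-> exists c d : A -> A, Cent c /\ JDer d /\ forall x, f x = c x + d x.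
Proof.
move=> char2 ee _ _ faithful_e faithful_e' f; split; last first.
  by case=> c [d [c_cent [d_jder fE]]]; exact: QJDer_Cent_JDer c_cent d_jder fE.
move=> f_qjder; have f_lin := f_qjder.1.
have two_reg : injective (fun u : A => u *+ 2).
  by apply: mulr2nI; apply: contraNneq char2 => two0; rewrite inE two0 eqxx.
have f_qj := QJDer_identity f_qjder.
have faithful_compl : corner_faithful (1 - e) e by move=> x l r; exact: faithful_e' x r l.
have z_central :=
  qj_central two_reg (is_linearD f_lin) f_qj ee (subrKC e 1) faithful_e faithful_compl.
exists (fun x => f 1 * x), (fun x => f x - f 1 * x); split; first exact: Cent_mull.
split; first exact: JDer_subr_mull.
by move=> x; rewrite addrC subrK.
Qed.
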